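(* For every $l\ge0$, $a=1,\dots,p_1$, $b=1,\dots,p_2$: $$zA^{(l)}_a(z)=\sum_{k=-N_2}^{N_1}J_k(l)A^{(l+k)}_a(z),\qquad zC^{(l)}_b(z)-c_b^{(l)}=\sum_{k=-N_2}^{N_1}J_k(l)C^{(l+k)}_b(z),$$ $$z\bar A^{(l)}_b(z)=\sum_{k=-N_2}^{N_1}J_k(l-k)\bar A^{(l-k)}_b(z),\qquad z\bar C^{(l)}_a(z)-\bar c_a^{(l)}=\sum_{k=-N_2}^{N_1}J_k(l-k)\bar C^{(l-k)}_a(z),$$ where terms with a negative superscript or negative argument are zero.
   Context: Setting: $\mu$ finite Borel measure on an interval, weights $w_{1,a}$ ($a\le p_1$), $w_{2,b}$ ($b\le p_2$), compositions $\vec n_\ell=(n_{\ell,1},\dots,n_{\ell,p_\ell})\in\mathbb N^{p_\ell}$; each $i\in\mathbb Z_+$ is uniquely $i=q|\vec n_\ell|+n_{\ell,1}+\dots+n_{\ell,a-1}+r$ ($0\le r<n_{\ell,a}$), $a_\ell(i)=a$, $k_\ell(i)=qn_{\ell,a}+r$; moment matrix $g_{i,j}=\int x^{k_1(i)+k_2(j)}w_{1,a_1(i)}w_{2,a_2(j)}d\mu$, assumed to factor as $g=S^{-1}\bar S$ ($S$ unit lower triangular, $\bar S$ upper triangular invertible). $e_{\ell,a}(k)=e_i$ with $a_\ell(i)=a,k_\ell(i)=k$; $\Lambda_{\ell,a}=\sum_ke_{\ell,a}(k)e_{\ell,a}(k+1)^\top$, $\Upsilon_\ell=\sum_a\Lambda_{\ell,a}$;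 $J=S\Upsilon_1S^{-1}=\bar S\Upsilon_2^\top\bar S^{-1}$ and $J_k(l):=J_{l,l+k}$. $N_1=\max_a(|\vec n_1|-n_{1,a}+1)$, $N_2=\max_b(|\vec n_2|-n_{2,b}+1)$. $\chi_{\ell,a}(z)=\sum_ke_{\ell,a}(k)z^k$, $\chi^*_{\ell,a}(z)=z^{-1}\chi_{\ell,a}(z^{-1})$. $A^{(l)}_a$ is the $l$-th entry of $S\chi_{1,a}$, $\bar A^{(l)}_b$ the $l$-th entry of $(\bar S^{-1})^\top\chi_{2,b}$, $C^{(l)}_b$ the $l$-th entry of the formal series vector $\bar S\chi^*_{2,b}(z)$, $\bar C^{(l)}_a$ the $l$-th entry of $(S^{-1})^\top\chi^*_{1,a}(z)$; $c_b=\bar Se_{2,b}(0)$, $\bar c_a=(S^{-1})^\top e_{1,a}(0)$, with $l$-th entries $c^{(l)}_b$, $\bar c^{(l)}_a$. *)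

From HB Require Import structures.
From mathcomp Require Import all_boot all_order all_algebra.
From mathcomp Require Import all_classical all_reals all_analysis.

Set Implicit Arguments.
Unset Strict Implicit.
Unset Printing Implicit Defensive.
Import Order.TTheory GRing.Theory Num.Theory.

(* Index bookkeeping for a composition n = (n 0, ..., n (p-1)),        *)
(* components indexed 0-based (paper's a = 1..p is our a = 0..p-1).    *)

Definition tot (p : nat) (n : nat -> nat) : nat := \sum_(b < p) n b.
Definition off (n : nat -> nat) (a : nat) : nat := \sum_(b < a) n b.

(* i = q|n| + off a + r with 0 <= r < n a : a(i) is the unique a with
   off a <= i mod |n| < off (a+1). *)
Definition aidx (p : nat) (n : nat -> nat) (i : nat) : nat :=
  find (fun a => i %% tot p n < off n a.+1) (iota 0 p).
Definition kidx (p : nat) (n : nat -> nat) (i : nat) : nat :=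
  (i %/ tot p n) * n (aidx p n i) + (i %% tot p n - off n (aidx p n i)).
(* e_a(k) is e_i with a(i) = a, k(i) = k; this is that index i *)
Definition eidx (p : nat) (n : nat -> nat) (a k : nat) : nat :=
  (k %/ n a) * tot p n + off n a + k %% n a.

Definition Nbd (p : nat) (n : nat -> nat) : nat :=
  \max_(a < p) (tot p n - n a + 1).

Section Defs.
Variable R : realType.
Local Open Scope ring_scope.

Definition mat := nat -> nat -> R.

Definition lower_tri (M : mat) := forall i j, (i < j)%N -> M i j = 0.
Definition upper_tri (M : mat) := forall i j, (j < i)%N -> M i j = 0.
Definition idmat : mat := fun i j => (i == j)%:R.

(* product A * B when A is lower triangular (finite sum) *)
Definition mulL (A B : mat) : mat := fun i j => \sum_(k < i.+1) A i k * B k j.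
(* product A * B when B is upper triangular (finite sum) *)
Definition mulU (A B : mat) : mat := fun i j => \sum_(k < j.+1) A i k * B k j.

Definition moment (mu : {finite_measure set R -> \bar R}) (I : interval R)
  (p1 p2 : nat) (n1 n2 : nat -> nat) (w1 w2 : nat -> R -> R) : mat :=
  fun i j => Rintegral mu [set` I]
     (fun x => x ^+ (kidx p1 n1 i + kidx p2 n2 j)
               * w1 (aidx p1 n1 i) x * w2 (aidx p2 n2 j) x).

(* Lambda_a = sum_k e_a(k) e_a(k+1)^T  and  Upsilon = sum_a Lambda_a *)
Definition Lam (p : nat) (n : nat -> nat) (a : nat) : mat :=
  fun i j => ((aidx p n i == a) && (aidx p n j == a)
              && (kidx p n j == (kidx p n i).+1))%:R.
Definition Ups (p : nat) (n : nat -> nat) : mat :=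
  fun i j => \sum_(a < p) Lam p n a i j.

(* J = S Upsilon_1 S^{-1}.  S is lower triangular (i <= l) and row i of
   Upsilon_1 is supported in columns j <= i + |n1|, so the sums are exact. *)
Definition Jmat (p1 : nat) (n1 : nat -> nat) (S Sinv : mat) : mat :=
  fun l m => \sum_(i < l.+1) \sum_(j < (l + tot p1 n1).+1)
               S l i * Ups p1 n1 i j * Sinv j m.

Definition Jz (J : mat) (i j : int) : R :=
  if (0 <= i) && (0 <= j) then J `|i|%N `|j|%N else 0.

(* the vector chi_a(z) = sum_k e_a(k) z^k, entrywise *)
Definition chi (p : nat) (n : nat -> nat) (a i : nat) : {poly R} :=
  if aidx p n i == a then 'X^(kidx p n i) else 0.

(* A^{(l)}_a = l-th entry of S chi_{1,a}   (S lower triangular) *)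
Definition Apol (p1 : nat) (n1 : nat -> nat) (S : mat) (l a : nat) : {poly R} :=
  \sum_(i < l.+1) S l i *: chi p1 n1 a i.
(* Abar^{(l)}_b = l-th entry of (Sbar^{-1})^T chi_{2,b}  (Sbar^{-1} upper tri) *)
Definition Abpol (p2 : nat) (n2 : nat -> nat) (Sbinv : mat) (l b : nat)
  : {poly R} := \sum_(i < l.+1) Sbinv i l *: chi p2 n2 b i.

Definition Az (P : nat -> nat -> {poly R}) (l : int) (a : nat) : {poly R} :=
  if 0 <= l then P `|l|%N a else 0.

(* Formal series in z^{-1}: F : int -> R, F m = coefficient of z^m.
   chi*_a(z) = z^{-1} chi_a(z^{-1}) = sum_k e_a(k) z^{-k-1}; its entry i has
   coefficient 1 at z^m iff a(i) = a and k(i) = -m-1.  Hence the l-th entry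
   of M chi*_a has coefficient M l (e_a(-m-1)) at z^m for m < 0, and 0 for
   m >= 0. *)
Definition fser := int -> R.

(* C^{(l)}_b = l-th entry of Sbar chi*_{2,b}(z) *)
Definition Cser (p2 : nat) (n2 : nat -> nat) (Sb : mat) (l b : nat) : fser :=
  fun m => if m < 0 then Sb l (eidx p2 n2 b (`|m| - 1)) else 0.
(* Cbar^{(l)}_a = l-th entry of (S^{-1})^T chi*_{1,a}(z) *)
Definition Cbser (p1 : nat) (n1 : nat -> nat) (Sinv : mat) (l a : nat) : fser :=
  fun m => if m < 0 then Sinv (eidx p1 n1 a (`|m| - 1)) l else 0.

Definition Cz (F : nat -> nat -> fser) (l : int) (a : nat) : fser :=
  if 0 <= l then F `|l|%N a else fun _ => 0.

Definition fzmul (F : fser) : fser := fun m => F (m - 1).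

(* c_b = Sbar e_{2,b}(0), cbar_a = (S^{-1})^T e_{1,a}(0): l-th entries *)
Definition cvec (p2 : nat) (n2 : nat -> nat) (Sb : mat) (l b : nat) : R :=
  Sb l (eidx p2 n2 b 0).
Definition cbvec (p1 : nat) (n1 : nat -> nat) (Sinv : mat) (l a : nat) : R :=
  Sinv (eidx p1 n1 a 0) l.

End Defs.

From HB Require Import structures.
From mathcomp Require Import all_boot all_order all_algebra.
From mathcomp Require Import all_classical all_reals all_analysis.
From mathcomp Require Import zify.
Set Implicit Arguments.
Unset Strict Implicit.
Unset Printing Implicit Defensive.
Import Order.TTheory GRing.Theory Num.Theory.
Local Open Scope ring_scope.

(* Write Υ₁ = Ups p1 n1 and Υ₂ = Ups p2 n2.  The moment matrix satisfies Υ₁ g = g Υ₂ᵀ: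
   both sides at (i, j) are moments in the same blocks a₁(i), a₂(j) with exponent
   k₁(i) + k₂(j) + 1.  With g = S⁻¹ S̄ this yields a second expression
   J = S Υ₁ S⁻¹ = S̄ Υ₂ᵀ S̄⁻¹.  Since Υ moves an index forward by at most N, the first
   expression makes J vanish above its N₁-th superdiagonal and the second below its
   N₂-th subdiagonal.  The recurrences are J S = S Υ₁, J S̄ = S̄ Υ₂ᵀ, S̄⁻¹ J = Υ₂ᵀ S̄⁻¹ and
   S⁻¹ J = Υ₁ S⁻¹ applied to χ and χ*, using Υ χ = z χ and Υᵀ χ* = z χ* − e(0). *)

Section Indexing.
Local Open Scope nat_scope.
Variables (p : nat) (n : nat -> nat).
Hypotheses (p_gt0 : 0 < p) (n_gt0 : forall a, a < p -> 0 < n a).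

Lemma offS a : off n a.+1 = off n a + n a.
Proof. by rewrite /off big_ord_recr. Qed.

Lemma leq_off a b : a <= b -> off n a <= off n b.
Proof.
move=> /subnKC <-; elim: (b - a) => [|k IH]; first by rewrite addn0.
by rewrite addnS offS; apply: leq_trans IH (leq_addr _ _).
Qed.

Lemma off_add_le_tot {a} : a < p -> off n a + n a <= tot p n.
Proof. by move=> ha; rewrite -offS; apply: leq_off. Qed.

Lemma tot_gt0 : 0 < tot p n.
Proof. by have := off_add_le_tot p_gt0; have := n_gt0 p_gt0; lia. Qed.

Lemma has_aidx i : has (fun a => i %% tot p n < off n a.+1) (iota 0 p).
Proof.
apply/hasP; exists p.-1; first by rewrite mem_iota add0n prednK ?leqnn.
by rewrite prednK // ltn_mod tot_gt0.
Qed.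

Lemma aidx_lt i : aidx p n i < p.
Proof. by have := has_aidx i; rewrite has_find size_iota. Qed.

Lemma aidx_bounds i :
  off n (aidx p n i) <= i %% tot p n < off n (aidx p n i).+1.
Proof.
set P := fun a => i %% tot p n < off n a.+1.
have := nth_find 0 (has_aidx i); rewrite nth_iota ?aidx_lt // => -> /[!andbT].
have := aidx_lt i; rewrite /aidx -/P.
case E: (find P (iota 0 p)) => [|a] ha; first by rewrite /off big_ord0.
have := @before_find _ 0 P (iota 0 p) a; rewrite E ltnSn nth_iota; last lia.
by rewrite /P add0n => /(_ isT) /negbT; rewrite -leqNgt.
Qed.

Lemma aidx_unique i a : a < p ->
  off n a <= i %% tot p n < off n a.+1 -> aidx p n i = a.
Proof.
move=> ha /andP[h1 h2]; have /andP[h3 h4] := aidx_bounds i.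
by case: (ltngtP (aidx p n i) a) => // /leq_off; lia.
Qed.

Lemma off_mod_lt_tot a k : a < p -> off n a + k %% n a < tot p n.
Proof.
by move=> ha; have := off_add_le_tot ha; have := ltn_pmod k (n_gt0 ha); lia.
Qed.

Lemma modn_eidx a k : a < p -> eidx p n a k %% tot p n = off n a + k %% n a.
Proof.
by move=> ha; rewrite /eidx -addnA modnMDl modn_small // (off_mod_lt_tot k ha).
Qed.

Lemma divn_eidx a k : a < p -> eidx p n a k %/ tot p n = k %/ n a.
Proof.
move=> ha; rewrite /eidx -addnA divnMDl ?tot_gt0 //.
by rewrite (divn_small (off_mod_lt_tot k ha)) addn0.
Qed.

Lemma aidx_eidx a k : a < p -> aidx p n (eidx p n a k) = a.
Proof.
move=> ha; apply: aidx_unique => //; rewrite modn_eidx // offS.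
by have := ltn_pmod k (n_gt0 ha); lia.
Qed.

Lemma kidx_eidx a k : a < p -> kidx p n (eidx p n a k) = k.
Proof.
move=> ha; rewrite /kidx aidx_eidx // modn_eidx // divn_eidx //.
by rewrite addKn -divn_eq.
Qed.

Lemma eidx_kidx i : eidx p n (aidx p n i) (kidx p n i) = i.
Proof.
have /andP[h1 h2] := aidx_bounds i; have ha := aidx_lt i.
set a := aidx p n i in ha h1 h2 *.
have hr : i %% tot p n - off n a < n a by move: h2; rewrite offS; lia.
rewrite /eidx /kidx -/a divnMDl ?n_gt0 // (divn_small hr) addn0.
by rewrite modnMDl (modn_small hr) -addnA subnKC // -divn_eq.
Qed.

Lemma eidx_eqE i a k : a < p ->
  (i == eidx p n a k) = (aidx p n i == a) && (kidx p n i == k).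
Proof.
move=> ha; apply/eqP/andP => [->|[/eqP <- /eqP <-]]; last by rewrite eidx_kidx.
by rewrite aidx_eidx // kidx_eidx.
Qed.

Lemma eidxE a k : a < p -> eidx p n a k = k + k %/ n a * (tot p n - n a) + off n a.
Proof.
move=> ha; have := off_add_le_tot ha; rewrite /eidx.
have := divn_eq k (n a); set q := k %/ n a; set r := k %% n a; nia.
Qed.

Lemma eidxS_le a k : a < p -> eidx p n a k.+1 <= eidx p n a k + (tot p n - n a).+1.
Proof.
move=> ha; rewrite !eidxE //; set d := n a; set c := tot p n - d.
have d_gt0 : 0 < d by apply: n_gt0.
suff : k.+1 %/ d <= k %/ d + 1 by move/(leq_mul (leqnn c)); rewrite ![c * _]mulnC; lia.
rewrite {1}(divn_eq k d) -addn1 -addnA divnMDl // leq_add2l addn1.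
by apply: leq_trans (leq_div2r d (ltn_pmod k d_gt0)) _; rewrite divnn d_gt0.
Qed.

Definition succ_idx i := eidx p n (aidx p n i) (kidx p n i).+1.

Lemma aidx_succ_idx i : aidx p n (succ_idx i) = aidx p n i.
Proof. exact/aidx_eidx/aidx_lt. Qed.

Lemma kidx_succ_idx i : kidx p n (succ_idx i) = (kidx p n i).+1.
Proof. exact/kidx_eidx/aidx_lt. Qed.

Lemma succ_idx_eidx a k : a < p -> succ_idx (eidx p n a k) = eidx p n a k.+1.
Proof. by move=> ha; rewrite /succ_idx aidx_eidx // kidx_eidx. Qed.

Lemma succ_idx_eq i a k : a < p ->
  (succ_idx i == eidx p n a k.+1) = (i == eidx p n a k).
Proof. by move=> ha; rewrite !eidx_eqE // aidx_succ_idx kidx_succ_idx. Qed.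

Lemma succ_idx_neq0 i a : a < p -> succ_idx i != eidx p n a 0.
Proof. by move=> ha; rewrite eidx_eqE // kidx_succ_idx andbF. Qed.

Lemma succ_idx_le i : succ_idx i <= i + (tot p n - n (aidx p n i)).+1.
Proof. by rewrite -{2}(eidx_kidx i) eidxS_le ?aidx_lt. Qed.

Lemma succ_idx_le_tot i : succ_idx i <= i + tot p n.
Proof.
have := succ_idx_le i; have := n_gt0 (aidx_lt i); have := off_add_le_tot (aidx_lt i).
lia.
Qed.

Lemma succ_idx_le_Nbd i : succ_idx i <= i + Nbd p n.
Proof.
apply: leq_trans (succ_idx_le i) _; rewrite leq_add2l -addn1.
exact: (@leq_bigmax _ (fun a : 'I_p => tot p n - n a + 1) (Ordinal (aidx_lt i))).
Qed.

Lemma UpsE (R : realType) i j : @Ups R p n i j = (j == succ_idx i)%:R.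
Proof.
rewrite /Ups (bigD1 (Ordinal (aidx_lt i))) //= big1 ?addr0.
  by rewrite /Lam eqxx /= /succ_idx eidx_eqE ?aidx_lt.
move=> a /negPf ha; rewrite /Lam.
suff -> : (aidx p n i == a) = false by [].
by apply/negbTE; apply: contraFneq ha => e; apply/eqP/val_inj.
Qed.

End Indexing.

Lemma sum_delta (R : pzSemiRingType) (N x : nat) (F : nat -> R) :
  \sum_(i < N) ((i : nat) == x)%:R * F i = if (x < N)%N then F x else 0.
Proof. by under eq_bigr do rewrite mulr_natl mulrb; rewrite -big_mkcond big_ord1_eq. Qed.

Section BandSums.
Variable V : nmodType.

Lemma sum_ord_widen0 (F : nat -> V) M M' : (M <= M')%N ->
  (forall m, (M <= m)%N -> F m = 0) ->
  \sum_(m < M) F m = \sum_(m < M') F m.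
Proof.
move=> hM hF; rewrite (big_ord_widen _ _ hM) big_mkcond /=; apply: eq_bigr => i _.
by case: ifP => // /negbT; rewrite -leqNgt => /hF ->.
Qed.

Definition zext (F : nat -> V) (m : int) : V := if 0 <= m then F `|m|%N else 0.

Lemma sum_band (A B l : nat) (F : nat -> V) :
  (forall m, (m + B < l)%N -> F m = 0) ->
  \sum_(i < (A + B).+1) zext F (l%:Z + (i%:Z - B%:Z)) = \sum_(m < (l + A).+1) F m.
Proof.
move=> hF; rewrite -(big_mkord xpredT F).
rewrite -(big_mkord xpredT (fun i : nat => zext F (l%:Z + (i%:Z - B%:Z)))).
case: (leqP B l) => hB.
  rewrite [RHS](big_cat_nat _ (n := l - B)%N) //=; last by lia.
  rewrite [X in _ = X + _]big_nat_cond [X in _ = X + _]big1 ?add0r; last first.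
    by move=> m /andP[/andP[_ hm] _]; apply: hF; lia.
  rewrite -[(l - B)%N]add0n big_addn.
  have -> : ((l + A).+1 - (l - B) = (A + B).+1)%N by lia.
  apply: eq_bigr => i _; rewrite /zext.
  by have -> : l%:Z + (i%:Z - B%:Z) = Posz (i + (l - B))%N by lia.
rewrite (big_cat_nat _ (n := (B - l)%N)) //=; last by lia.
rewrite big_nat_cond big1 ?add0r; last first.
  by move=> i /andP[/andP[_ hi] _]; rewrite /zext; case: ifP => //; lia.
rewrite -[(B - l)%N]add0n big_addn.
have -> : ((A + B).+1 - (B - l) = (l + A).+1)%N by lia.
apply: eq_bigr => i _; rewrite /zext.
by have -> : l%:Z + (Posz (i + (B - l))%N - B%:Z) = i%:Z by lia.
Qed.

Lemma sum_band_rev (A B l : nat) (F : nat -> V) :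
  (forall m, (m + A < l)%N -> F m = 0) ->
  \sum_(i < (A + B).+1) zext F (l%:Z - (i%:Z - B%:Z)) = \sum_(m < (l + B).+1) F m.
Proof.
move=> hF; rewrite -(sum_band B hF) (reindex_inj rev_ord_inj) /= [(B + A)%N]addnC.
apply: eq_bigr => i _; congr zext; have := ltn_ord i; lia.
Qed.

End BandSums.

Section Conjugation.
Variable R : realType.

Lemma mulL_idmatE (A B : mat R) : mulL A B = idmat R ->
  forall x i, \sum_(k < x.+1) A x k * B k i = (x == i)%:R.
Proof. by move=> AB x i; rewrite -/(idmat R x i) -AB. Qed.

Lemma mulU_idmatE (A B : mat R) : mulU A B = idmat R ->
  forall x i, \sum_(k < i.+1) A x k * B k i = (x == i)%:R.
Proof. by move=> AB x i; rewrite -/(idmat R x i) -AB. Qed.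

Variables (p : nat) (n : nat -> nat).
Hypotheses (p_gt0 : (0 < p)%N) (n_gt0 : forall a, (a < p)%N -> (0 < n a)%N).
Local Notation succ := (succ_idx p n).

Lemma chi_coef a i t : (a < p)%N -> (chi R p n a i)`_t = (i == eidx p n a t)%:R.
Proof.
move=> ha; rewrite /chi (eidx_eqE p_gt0 n_gt0 _ _ ha).
by case: ifP => _; rewrite ?coefXn ?coef0 // eq_sym.
Qed.

Section Lower.
Variables S Sinv : mat R.
Hypotheses (S_lower : lower_tri S) (Sinv_lower : lower_tri Sinv)
  (Sinv_S : mulL Sinv S = idmat R).
Local Notation J := (Jmat p n S Sinv).

Lemma JmatE l m : J l m = \sum_(i < l.+1) S l i * Sinv (succ i) m.
Proof.
apply: eq_bigr => i _.
under eq_bigr do rewrite (UpsE p_gt0 n_gt0) mulrAC mulrC.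
rewrite (@sum_delta _ _ _ (fun j => S l i * Sinv j m)) ltnS.
by have := succ_idx_le_tot p_gt0 n_gt0 i; have := ltn_ord i; case: ifP => //; lia.
Qed.

Lemma Jmat_above_band l m : (l + Nbd p n < m)%N -> J l m = 0.
Proof.
move=> h; rewrite JmatE big1 // => i _; rewrite Sinv_lower ?mulr0 //.
by have := succ_idx_le_Nbd p_gt0 n_gt0 i; have := ltn_ord i; lia.
Qed.

Lemma Apol_coef l a t : (a < p)%N -> (Apol p n S l a)`_t = S l (eidx p n a t).
Proof.
move=> ha; rewrite /Apol coef_sum.
under eq_bigr do rewrite coefZ chi_coef // mulrC.
by rewrite (@sum_delta _ _ _ (S l)); case: ltnP => // h; rewrite S_lower.
Qed.

Lemma Jmat_mulS l x M : (forall m, (M <= m)%N -> J l m = 0) ->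
  \sum_(m < M) J l m * S m x = \sum_(i < l.+1) S l i * (succ i == x)%:R.
Proof.
move=> hJ; rewrite (@sum_ord_widen0 _ (fun m => J l m * S m x) M (M + l + tot p n).+1);
  last (by move=> m hm; rewrite hJ ?mul0r); last lia.
under eq_bigr do rewrite JmatE mulr_suml.
rewrite exchange_big /=; apply: eq_bigr => i _.
under eq_bigr do rewrite -mulrA; rewrite -mulr_sumr -(mulL_idmatE Sinv_S).
congr (_ * _); symmetry.
apply: (@sum_ord_widen0 _ (fun m => Sinv (succ i) m * S m x));
  last by move=> m hm; rewrite Sinv_lower ?mul0r.
by have := succ_idx_le_tot p_gt0 n_gt0 i; have := ltn_ord i; lia.
Qed.

Lemma Sinv_mulJmat x l M : (forall m, (M <= m)%N -> J m l = 0) ->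
  \sum_(m < M) Sinv x m * J m l = Sinv (succ x) l.
Proof.
move=> hJ; rewrite (@sum_ord_widen0 _ (fun m => Sinv x m * J m l) M (M + x).+1);
  last (by move=> m hm; rewrite hJ ?mulr0); last lia.
under eq_bigr => m _.
  rewrite JmatE mulr_sumr (@sum_ord_widen0 _
    (fun i => Sinv x m * (S m i * Sinv (succ i) l)) m.+1 (M + x).+1) //;
    last by move=> i hi; rewrite S_lower ?mul0r ?mulr0.
  over.
rewrite exchange_big /=.
transitivity (\sum_(i < (M + x).+1) ((i : nat) == x)%:R * Sinv (succ i) l);
  last by rewrite (@sum_delta _ _ _ (fun i => Sinv (succ i) l)) ltnS leq_addl.
apply: eq_bigr => i _; under eq_bigr do rewrite mulrA.
rewrite -mulr_suml eq_sym -(mulL_idmatE Sinv_S); congr (_ * _).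
symmetry; apply: (@sum_ord_widen0 _ (fun m => Sinv x m * S m i)) => [|m hm].
  by lia.
by rewrite Sinv_lower ?mul0r.
Qed.

End Lower.

Section Upper.
Variables Sb Sbinv : mat R.
Hypotheses (Sb_upper : upper_tri Sb) (Sbinv_upper : upper_tri Sbinv)
  (Sbinv_Sb : mulU Sbinv Sb = idmat R).

(* [(S̄ Υᵀ S̄⁻¹) l m], since column [y] of [Υᵀ] is [e_(succ_idx y)]. *)
Definition Jmat_bar : mat R := fun l m => \sum_(y < m.+1) Sb l (succ y) * Sbinv y m.
Local Notation Jb := Jmat_bar.

Lemma Abpol_coef l b t : (b < p)%N -> (Abpol p n Sbinv l b)`_t = Sbinv (eidx p n b t) l.
Proof.
move=> hb; rewrite /Abpol coef_sum.
under eq_bigr do rewrite coefZ chi_coef // mulrC.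
by rewrite (@sum_delta _ _ _ (Sbinv^~ l)); case: ltnP => // h; rewrite Sbinv_upper.
Qed.

Lemma Jmat_bar_below_band l m : (m + Nbd p n < l)%N -> Jb l m = 0.
Proof.
move=> h; rewrite /Jb big1 // => y _; rewrite Sb_upper ?mul0r //.
by have := succ_idx_le_Nbd p_gt0 n_gt0 y; have := ltn_ord y; lia.
Qed.

Lemma Jmat_bar_mulSb l x M : (forall m, (M <= m)%N -> Jb l m = 0) ->
  \sum_(m < M) Jb l m * Sb m x = Sb l (succ x).
Proof.
move=> hJ; rewrite (@sum_ord_widen0 _ (fun m => Jb l m * Sb m x) M (M + x).+1);
  last (by move=> m hm; rewrite hJ ?mul0r); last lia.
under eq_bigr => m _.
  rewrite /Jb mulr_suml (@sum_ord_widen0 _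
    (fun y => Sb l (succ y) * Sbinv y m * Sb m x) m.+1 (M + x).+1) //;
    last by move=> y hy; rewrite Sbinv_upper ?mulr0 ?mul0r.
  over.
rewrite exchange_big /=.
transitivity (\sum_(y < (M + x).+1) ((y : nat) == x)%:R * Sb l (succ y));
  last by rewrite (@sum_delta _ _ _ (fun y => Sb l (succ y))) ltnS leq_addl.
apply: eq_bigr => y _; under eq_bigr do rewrite -mulrA.
rewrite -mulr_sumr mulrC -(mulU_idmatE Sbinv_Sb); congr (_ * _).
symmetry; apply: (@sum_ord_widen0 _ (fun m => Sbinv y m * Sb m x)) => [|m hm].
  by lia.
by rewrite [Sb m _]Sb_upper ?mulr0.
Qed.

Lemma Sbinv_mulJmat_bar x l M : (forall m, (M <= m)%N -> Jb m l = 0) ->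
  \sum_(m < M) Sbinv x m * Jb m l = \sum_(y < l.+1) (x == succ y)%:R * Sbinv y l.
Proof.
move=> hJ; rewrite (@sum_ord_widen0 _ (fun m => Sbinv x m * Jb m l) M (M + l + tot p n).+1);
  last (by move=> m hm; rewrite hJ ?mulr0); last lia.
under eq_bigr do rewrite /Jb mulr_sumr.
rewrite exchange_big /=; apply: eq_bigr => y _.
under eq_bigr do rewrite mulrA; rewrite -mulr_suml -(mulU_idmatE Sbinv_Sb).
congr (_ * _); symmetry; apply: (@sum_ord_widen0 _ (fun m => Sbinv x m * Sb m (succ y))).
  by have := succ_idx_le_tot p_gt0 n_gt0 y; have := ltn_ord y; lia.
by move=> m hm; rewrite [Sb m _]Sb_upper ?mulr0.
Qed.

End Upper.
End Conjugation.

Section MomentRecurrences.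
Variables (R : realType) (mu : {finite_measure set R -> \bar R}) (I : interval R)
  (p1 p2 : nat) (n1 n2 : nat -> nat) (w1 w2 : nat -> R -> R)
  (S Sinv Sb Sbinv : mat R).
Hypotheses (p1_gt0 : (0 < p1)%N) (p2_gt0 : (0 < p2)%N)
  (n1_gt0 : forall a, (a < p1)%N -> (0 < n1 a)%N)
  (n2_gt0 : forall b, (b < p2)%N -> (0 < n2 b)%N).
Hypotheses (S_lower : lower_tri S) (Sinv_lower : lower_tri Sinv)
  (S_Sinv : mulL S Sinv = idmat R) (Sinv_S : mulL Sinv S = idmat R)
  (Sb_upper : upper_tri Sb) (Sbinv_upper : upper_tri Sbinv)
  (Sb_Sbinv : mulU Sb Sbinv = idmat R) (Sbinv_Sb : mulU Sbinv Sb = idmat R)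
  (g_LU : moment mu I p1 p2 n1 n2 w1 w2 = mulL Sinv Sb).
Local Notation J := (Jmat p1 n1 S Sinv).
Local Notation N1 := (Nbd p1 n1).
Local Notation N2 := (Nbd p2 n2).
Local Notation g := (moment mu I p1 p2 n1 n2 w1 w2).
Local Notation succ1 := (succ_idx p1 n1).
Local Notation succ2 := (succ_idx p2 n2).

Lemma moment_succ_idx i j : g (succ1 i) j = g i (succ2 j).
Proof.
by rewrite /moment !aidx_succ_idx ?kidx_succ_idx // addSn addnS.
Qed.

Lemma Sinv_moment x m : Sinv x m = \sum_(j < m.+1) g x j * Sbinv j m.
Proof.
under eq_bigr do rewrite g_LU /mulL mulr_suml.
rewrite exchange_big /=.
under eq_bigr do (under eq_bigr do rewrite -mulrA; rewrite -mulr_sumr mulU_idmatE // mulrC).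
rewrite sum_delta; case: ifP => // /negbT; rewrite -leqNgt => h.
by rewrite Sinv_lower.
Qed.

Lemma Sb_moment x m : Sb x m = \sum_(k < x.+1) S x k * g k m.
Proof.
under eq_bigr => k _.
  rewrite g_LU /mulL mulr_sumr
    (@sum_ord_widen0 _ (fun t => S x k * (Sinv k t * Sb t m)) k.+1 x.+1) //;
    last by move=> t ht; rewrite Sinv_lower ?mul0r ?mulr0.
  over.
rewrite exchange_big /=.
under eq_bigr do (under eq_bigr do rewrite mulrA; rewrite -mulr_suml mulL_idmatE // eq_sym).
by rewrite (@sum_delta _ _ _ (fun t => Sb t m)) ltnSn.
Qed.

Lemma Jmat_Jmat_bar l m : J l m = Jmat_bar p2 n2 Sb Sbinv l m.
Proof.
rewrite JmatE //.
under eq_bigr do rewrite Sinv_moment mulr_sumr.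
rewrite exchange_big /=; apply: eq_bigr => j _.
under eq_bigr do rewrite moment_succ_idx mulrA.
by rewrite -mulr_suml Sb_moment.
Qed.

Lemma Jmat_below_band l m : (m + N2 < l)%N -> J l m = 0.
Proof. by move=> h; rewrite Jmat_Jmat_bar Jmat_bar_below_band. Qed.

Lemma Apol_recurrence l a : (a < p1)%N ->
  'X * Apol p1 n1 S l a
     = \sum_(i < (N1 + N2).+1)
         let k := i%:Z - N2%:Z in
         Jz J l (l%:Z + k) *: Az (Apol p1 n1 S) (l%:Z + k) a.
Proof.
move=> ha; apply/polyP => t; rewrite coefXM [RHS]coef_sum.
rewrite (eq_bigr (fun i : 'I_(N1 + N2).+1 =>
    zext (fun m => J l m * S m (eidx p1 n1 a t)) (l%:Z + (i%:Z - N2%:Z)))); last first.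
  move=> i _; rewrite /= coefZ /Jz /Az /zext le0z_nat /=.
  by case: ifP; rewrite ?Apol_coef ?coef0 ?mulr0.
rewrite sum_band; last by move=> m hm; rewrite Jmat_below_band ?mul0r.
rewrite Jmat_mulS //; last by move=> m hm; rewrite Jmat_above_band //; lia.
case: t => [|t] /=.
  by rewrite big1 // => i _; rewrite (negbTE (succ_idx_neq0 p1_gt0 n1_gt0 i ha)) mulr0.
under eq_bigr do rewrite succ_idx_eq // mulrC.
by rewrite Apol_coef // (@sum_delta _ _ _ (S l)); case: ltnP => // h; rewrite S_lower.
Qed.

Lemma Abpol_recurrence l b : (b < p2)%N ->
  'X * Abpol p2 n2 Sbinv l b
     = \sum_(i < (N1 + N2).+1)
         let k := i%:Z - N2%:Z in
         Jz J (l%:Z - k) l *: Az (Abpol p2 n2 Sbinv) (l%:Z - k) b.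
Proof.
move=> hb; apply/polyP => t; rewrite coefXM [RHS]coef_sum.
rewrite (eq_bigr (fun i : 'I_(N1 + N2).+1 =>
    zext (fun m => Sbinv (eidx p2 n2 b t) m * J m l) (l%:Z - (i%:Z - N2%:Z)))); last first.
  move=> i _; rewrite /= coefZ /Jz /Az /zext le0z_nat andbT /=.
  by case: ifP; rewrite ?Abpol_coef ?coef0 ?mulr0 // mulrC.
rewrite sum_band_rev; last by move=> m hm; rewrite Jmat_above_band ?mulr0.
under eq_bigr do rewrite Jmat_Jmat_bar.
rewrite Sbinv_mulJmat_bar //; last by move=> m hm; rewrite -Jmat_Jmat_bar Jmat_below_band //; lia.
case: t => [|t] /=.
  by rewrite big1 // => i _; rewrite eq_sym (negbTE (succ_idx_neq0 p2_gt0 n2_gt0 i hb)) mul0r.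
under eq_bigr do rewrite eq_sym succ_idx_eq //.
by rewrite Abpol_coef // (@sum_delta _ _ _ (Sbinv^~ l)); case: ltnP => // h; rewrite Sbinv_upper.
Qed.

Lemma Cser_recurrence l b m : (b < p2)%N ->
  fzmul (Cser p2 n2 Sb l b) m - (m == 0)%:R * cvec p2 n2 Sb l b
  = \sum_(i < (N1 + N2).+1)
      let k := i%:Z - N2%:Z in
      Jz J l (l%:Z + k) * Cz (Cser p2 n2 Sb) (l%:Z + k) b m.
Proof.
move=> hb.
rewrite (eq_bigr (fun i : 'I_(N1 + N2).+1 =>
    zext (fun k => J l k * Cser p2 n2 Sb k b m) (l%:Z + (i%:Z - N2%:Z)))); last first.
  by move=> i _; rewrite /= /Jz /Cz /zext le0z_nat /=; case: ifP; rewrite ?mul0r.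
rewrite sum_band; last by move=> k hk; rewrite Jmat_below_band ?mul0r.
rewrite /fzmul /cvec /Cser; case: (boolP (m < 0)) => hm.
  under eq_bigr do rewrite Jmat_Jmat_bar.
  rewrite Jmat_bar_mulSb //; last by move=> k hk; rewrite -Jmat_Jmat_bar Jmat_above_band //; lia.
  rewrite ifT ?(negbTE (ltr0_neq0 hm)) ?mul0r ?subr0 ?succ_idx_eidx //; last lia.
  by congr (Sb l (eidx _ _ _ _)); lia.
rewrite big1 => [|k _]; last by rewrite mulr0.
have [-> | m_neq0] := eqVneq m 0; first by rewrite mul1r subrr.
by rewrite ifF ?mul0r ?subrr //; lia.
Qed.

Lemma Cbser_recurrence l a m : (a < p1)%N ->
  fzmul (Cbser p1 n1 Sinv l a) m - (m == 0)%:R * cbvec p1 n1 Sinv l a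
  = \sum_(i < (N1 + N2).+1)
      let k := i%:Z - N2%:Z in
      Jz J (l%:Z - k) l * Cz (Cbser p1 n1 Sinv) (l%:Z - k) a m.
Proof.
move=> ha.
rewrite (eq_bigr (fun i : 'I_(N1 + N2).+1 =>
    zext (fun k => Cbser p1 n1 Sinv k a m * J k l) (l%:Z - (i%:Z - N2%:Z)))); last first.
  move=> i _; rewrite /= /Jz /Cz /zext le0z_nat andbT /=.
  by case: ifP; rewrite ?mul0r // mulrC.
rewrite sum_band_rev; last by move=> k hk; rewrite Jmat_above_band ?mulr0.
rewrite /fzmul /cbvec /Cbser; case: (boolP (m < 0)) => hm.
  rewrite Sinv_mulJmat //; last by move=> k hk; rewrite Jmat_below_band //; lia.
  rewrite ifT ?(negbTE (ltr0_neq0 hm)) ?mul0r ?subr0 ?succ_idx_eidx //; last lia.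
  by congr (Sinv (eidx _ _ _ _) l); lia.
rewrite big1 => [|k _]; last by rewrite mul0r.
have [-> | m_neq0] := eqVneq m 0; first by rewrite mul1r subrr.
by rewrite ifF ?mul0r ?subrr //; lia.
Qed.

End MomentRecurrences.

Theorem theorem2p2
  (R : realType) (mu : {finite_measure set R -> \bar R}) (I : interval R)
  (p1 p2 : nat) (n1 n2 : nat -> nat) (w1 w2 : nat -> R -> R)
  (S Sinv Sb Sbinv : mat R) :
  (0 < p1)%N -> (0 < p2)%N ->
  (forall a, (a < p1)%N -> (0 < n1 a)%N) ->
  (forall b, (b < p2)%N -> (0 < n2 b)%N) ->
  (forall a, (a < p1)%N -> measurable_fun [set` I] (w1 a)) ->
  (forall b, (b < p2)%N -> measurable_fun [set` I] (w2 b)) ->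
  (forall i j, mu.-integrable [set` I]
     (fun x => (x ^+ (kidx p1 n1 i + kidx p2 n2 j)
                * w1 (aidx p1 n1 i) x * w2 (aidx p2 n2 j) x)%:E)) ->
  (* S unit lower triangular, Sinv its (lower triangular) inverse *)
  lower_tri S -> (forall i, S i i = 1) ->
  lower_tri Sinv -> mulL S Sinv = @idmat R -> mulL Sinv S = @idmat R ->
  (* Sbar upper triangular invertible, Sbinv its (upper triangular) inverse *)
  upper_tri Sb -> upper_tri Sbinv ->
  mulU Sb Sbinv = @idmat R -> mulU Sbinv Sb = @idmat R ->
  (* g = S^{-1} Sbar *)
  moment mu I p1 p2 n1 n2 w1 w2 = mulL Sinv Sb ->
  let J := Jmat p1 n1 S Sinv in
  let N1 := Nbd p1 n1 in
  let N2 := Nbd p2 n2 in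
  forall (l a b : nat), (a < p1)%N -> (b < p2)%N ->
  [/\
   'X * Apol p1 n1 S l a
     = \sum_(i < (N1 + N2).+1)
         let k := i%:Z - N2%:Z in
         Jz J l (l%:Z + k) *: Az (Apol p1 n1 S) (l%:Z + k) a,
   (forall m : int,
     fzmul (Cser p2 n2 Sb l b) m - (m == 0)%:R * cvec p2 n2 Sb l b
     = \sum_(i < (N1 + N2).+1)
         let k := i%:Z - N2%:Z in
         Jz J l (l%:Z + k) * Cz (Cser p2 n2 Sb) (l%:Z + k) b m),
   'X * Abpol p2 n2 Sbinv l b
     = \sum_(i < (N1 + N2).+1)
         let k := i%:Z - N2%:Z in
         Jz J (l%:Z - k) l *: Az (Abpol p2 n2 Sbinv) (l%:Z - k) b
 & (forall m : int,
     fzmul (Cbser p1 n1 Sinv l a) m - (m == 0)%:R * cbvec p1 n1 Sinv l a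
     = \sum_(i < (N1 + N2).+1)
         let k := i%:Z - N2%:Z in
         Jz J (l%:Z - k) l * Cz (Cbser p1 n1 Sinv) (l%:Z - k) a m)].
Proof.
move=> p1_gt0 p2_gt0 n1_gt0 n2_gt0 _ _ _ S_lower _ Sinv_lower S_Sinv Sinv_S
  Sb_upper Sbinv_upper Sb_Sbinv Sbinv_Sb g_LU J N1 N2 l a b ha hb.
split=> [|m||m].
- exact (Apol_recurrence p1_gt0 p2_gt0 n1_gt0 n2_gt0 S_lower Sinv_lower
    S_Sinv Sinv_S Sb_upper Sb_Sbinv g_LU l ha).
- exact (Cser_recurrence p1_gt0 p2_gt0 n1_gt0 n2_gt0 Sinv_lower S_Sinv
    Sb_upper Sbinv_upper Sb_Sbinv Sbinv_Sb g_LU l m hb).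
- exact (Abpol_recurrence p1_gt0 p2_gt0 n1_gt0 n2_gt0 Sinv_lower S_Sinv
    Sb_upper Sbinv_upper Sb_Sbinv Sbinv_Sb g_LU l hb).
- exact (Cbser_recurrence p1_gt0 p2_gt0 n1_gt0 n2_gt0 S_lower Sinv_lower
    S_Sinv Sinv_S Sb_upper Sb_Sbinv g_LU l m ha).
Qed.
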